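(* Let $k\ge\ell\ge1$ be integers with $k+\ell\ge6$ and let $G$ be a finite digraph. For every $v\in V(G)$, $$s(v)\le\frac{1}{m+1}\left(\lambda_0\,\rho(v)^m+\lambda_1\,\rho(v)(1-\rho(v))^{m-1}\right).$$
   Context: Put $m=k+\ell$, $\lambda_0=k^k\ell^\ell/m^m$, $\lambda_1=k^k\ell(\ell-1)^{\ell-1}/(m-1)^{m-1}$ (with $0^0=1$). Digraphs are finite, without loops; $xy$ denotes an arc from $x$ to $y$; two vertices are adjacent if at least one of $xy,yx$ is an arc. The oriented star $S_{k,\ell}$ has a center $c$, a set $O$ of $k$ out-leaves and a set $I$ of $\ell$ in-leaves; its arcs are exactly $co$ ($o\in O$) and $ic$ ($i\in I$). For a digraph $G$ on $n$ vertices, let $\phi$ be a uniformly random map from $V(S_{k,\ell})$ to $V(G)$ (all $n^{m+1}$ maps equally likely), and let $\mathcal S$ be the set of maps $\phi$ that are isomorphisms from $S_{k,\ell}$ onto $G[\mathrm{Im}\,\phi]$ (in particular injective). $s(v)=\Pr[\phi\in\mathcal S\mid v\in\mathrm{Im}\,\phi]$. $\rho(v)$ is the number of vertices adjacent to $v$, divided by $n$. *)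

From mathcomp Require Import all_boot all_order all_algebra.
Set Implicit Arguments. Unset Strict Implicit. Unset Printing Implicit Defensive.
Import Order.TTheory GRing.Theory Num.Theory.

(* Vertices of the oriented star S_{k,l} are 'I_(k+l).+1:
   0 is the center c, 1..k are the k out-leaves (arcs c -> o),
   k+1..k+l are the l in-leaves (arcs i -> c). *)
Definition star_arc (k l : nat) (i j : 'I_(k + l).+1) : bool :=
  ((i == 0 :> nat) && (1 <= j <= k)) || ((j == 0 :> nat) && (k < i)).

(* A digraph is a finite type V with an arc relation; "no loops" is
   assumed as irreflexivity in the theorem. *)
(* phi is an isomorphism from S_{k,l} onto G[Im phi]. *)
Definition is_star_copy (V : finType) (arc : rel V) (k l : nat)
    (phi : {ffun 'I_(k + l).+1 -> V}) : bool :=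
  injectiveb phi && [forall i, forall j, arc (phi i) (phi j) == @star_arc k l i j].

(* s(v) = Pr[phi in S | v in Im phi] for phi uniform over all maps. *)
Definition s_star (R : fieldType) (V : finType) (arc : rel V) (k l : nat)
    (v : V) : R :=
  (#|[set phi : {ffun 'I_(k + l).+1 -> V} | @is_star_copy V arc k l phi && (v \in codom phi)]|%:R)
  / (#|[set phi : {ffun 'I_(k + l).+1 -> V} | v \in codom phi]|%:R).

Definition adjacent (V : finType) (arc : rel V) (x y : V) : bool :=
  arc x y || arc y x.

Definition rho (R : fieldType) (V : finType) (arc : rel V) (v : V) : R :=
  (#|[set u | adjacent arc v u]|%:R) / (#|V|%:R).

(* lambda_0 = k^k l^l / m^m and lambda_1 = k^k l (l-1)^(l-1) / (m-1)^(m-1),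
   with m = k + l and 0^0 = 1 (as for expn). *)
Definition lambda0 (R : fieldType) (k l : nat) : R :=
  ((k ^ k * l ^ l)%N%:R) / (((k + l) ^ (k + l))%N%:R).

Definition lambda1 (R : fieldType) (k l : nat) : R :=
  ((k ^ k * l * (l - 1) ^ (l - 1))%N%:R) / (((k + l - 1) ^ (k + l - 1))%N%:R).

From mathcomp Require Import all_boot all_order all_algebra.
From mathcomp Require Import ring lra zify.
Import Order.TTheory GRing.Theory Num.Theory.
Set Implicit Arguments. Unset Strict Implicit. Unset Printing Implicit Defensive.

(* Write m = k + l, n = #|V|, d for the number of neighbours of v and N for
   the number of vertices other than v that are not adjacent to v, so that
   n = d + N + 1 and rho(v) = d / n.  Then s(v) = T / D, where T counts the
   copies of S_{k,l} whose image contains v and D = n^(m+1) - (n-1)^(m+1)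
   counts the maps whose image contains v.
   - Counting (section StarCopies): split the copies by the star vertex sent
     to v.  At the center the leaves go injectively into the strict out- and
     in-neighbourhoods of v; at a leaf, the center is a neighbour c of v and
     every other leaf is a non-neighbour of v in the neighbourhood of c.
   - Estimating: the weighted AM-GM inequality x^p y^q <= p^p q^q / (p+q)^(p+q)
     (x+y)^(p+q) bounds each term, giving T <= lambda0 (d-1)^m + lambda1 d N^(m-1);
     the center needs a^_k <= (a-1)^k (k >= 3), the out-leaves need the
     monotonicity of (1 + 1/n)^n (l <= k).
   - Normalizing: D >= (m+1) n (n-1)^(m-1), and dividing yields the claim. *)

Lemma card_le_sum_bigcup (T I : finType) (P : pred I) (A : {set T}) (B : I -> {set T}) :
  A \subset \bigcup_(i | P i) B i -> (#|A| <= \sum_(i | P i) #|B i|)%N.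
Proof.
move=> sAB; apply: leq_trans (subset_leq_card sAB) _.
elim/big_rec2: _ => [|i X n _ H]; first by rewrite cards0.
by apply: leq_trans (leq_card_setU _ _) _; rewrite leq_add2l.
Qed.

Lemma card_disjoint_le (T : finType) (A B C : {set T}) :
  [disjoint A & B] -> A \subset C -> B \subset C -> (#|A| + #|B| <= #|C|)%N.
Proof.
move=> dAB sA sB; rewrite -cardsUI (_ : A :&: B = set0) ?cards0 ?addn0.
  by apply: subset_leq_card; rewrite subUset sA sB.
by apply/eqP; rewrite setI_eq0.
Qed.

Definition out_leaf (k l : nat) (i : 'I_k) : 'I_(k + l).+1 := lift ord0 (lshift l i).
Definition in_leaf (k l : nat) (j : 'I_l) : 'I_(k + l).+1 := lift ord0 (rshift k j).

Lemma out_leafE k l (i : 'I_k) : val (out_leaf l i) = i.+1.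
Proof. by []. Qed.

Lemma in_leafE k l (j : 'I_l) : val (in_leaf k j) = (k + j).+1.
Proof. by []. Qed.

Lemma star_vertexP k l (x : 'I_(k + l).+1) :
  [\/ x = ord0, exists i, x = out_leaf l i | exists j, x = in_leaf k j].
Proof.
case: (unliftP ord0 x) => [y ->|->]; last exact: Or31.
rewrite -(@splitK k l y); case: (@split k l y) => [i|j] /=.
  by apply: Or32; exists i.
by apply: Or33; exists j.
Qed.

Lemma star_arc_out k l (i : 'I_k) : star_arc ord0 (out_leaf l i).
Proof. by rewrite /star_arc out_leafE /= ltn_ord. Qed.

Lemma star_arc_out_back k l (i : 'I_k) : ~~ star_arc (out_leaf l i) ord0.
Proof. by rewrite /star_arc out_leafE /= ltnNge ltn_ord. Qed.

Lemma star_arc_in k l (j : 'I_l) : star_arc (in_leaf k j) ord0.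
Proof. rewrite /star_arc in_leafE /=; lia. Qed.

Lemma star_arc_in_back k l (j : 'I_l) : ~~ star_arc ord0 (in_leaf k j).
Proof. rewrite /star_arc in_leafE /=; lia. Qed.

Lemma star_arc_leaves k l (x y : 'I_(k + l).+1) :
  x != ord0 -> y != ord0 -> ~~ star_arc x y.
Proof. by rewrite /star_arc -!(inj_eq val_inj) /= => /negbTE -> /negbTE ->. Qed.

Lemma star_copyE (V : finType) (arc : rel V) k l (f : {ffun 'I_(k + l).+1 -> V}) :
  is_star_copy arc f -> injective f /\ forall x y, arc (f x) (f y) = star_arc x y.
Proof.
case/andP => /injectiveP f_inj /forallP f_arc; split => // x y.
by have /forallP/(_ y)/eqP := f_arc x.
Qed.

Section Neighbourhoods.
Variables (V : finType) (arc : rel V).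

Definition out_nbhd (v : V) : {set V} := [set u | arc v u && ~~ arc u v].
Definition in_nbhd (v : V) : {set V} := [set u | arc u v && ~~ arc v u].
Definition nbhd (v : V) : {set V} := [set u | adjacent arc v u].
Definition non_nbhd (v : V) : {set V} := [set u | ~~ adjacent arc v u && (u != v)].

(* Strict out- and in-neighbours are disjoint kinds of neighbours. *)
Lemma card_out_in_nbhd v : (#|out_nbhd v| + #|in_nbhd v| <= #|nbhd v|)%N.
Proof.
apply: card_disjoint_le.
- rewrite -setI_eq0; apply/eqP/setP => u; rewrite !inE.
  by apply/negbTE/negP => /andP[/andP[_ nuv] /andP[uv _]]; rewrite uv in nuv.
- by apply/subsetP => u; rewrite !inE /adjacent => /andP[-> _].
- by apply/subsetP => u; rewrite !inE /adjacent => /andP[-> _]; rewrite orbT.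
Qed.

(* A vertex cannot be both a strict out- and a strict in-neighbour of c. *)
Lemma card_non_nbhd_split v c :
  (#|non_nbhd v :&: out_nbhd c| + #|non_nbhd v :&: in_nbhd c| <= #|non_nbhd v|)%N.
Proof.
apply: card_disjoint_le; last 2 first.
- by apply/subsetP => u; rewrite inE => /andP[].
- by apply/subsetP => u; rewrite inE => /andP[].
rewrite -setI_eq0; apply/eqP/setP => u; rewrite !inE.
by apply/negbTE/negP => /and4P[/and3P[_ _ ncu] _ cu _]; rewrite cu in ncu.
Qed.

(* Without loops, V splits into v, its neighbours and its non-neighbours. *)
Lemma card_nbhd_non_nbhd v : irreflexive arc -> #|V| = (#|nbhd v| + #|non_nbhd v|).+1.
Proof.
move=> irr; have -> : non_nbhd v = ~: (nbhd v :|: [set v]).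
  by apply/setP => u; rewrite !inE negb_or.
rewrite -(cardsC (nbhd v :|: [set v])) cardsU cards1.
rewrite (_ : nbhd v :&: [set v] = set0) ?cards0 ?subn0 ?addn1 //.
apply/setP => u; rewrite !inE; case: eqP => [->|]; last by rewrite andbF.
by rewrite /adjacent irr.
Qed.

End Neighbourhoods.

Section StarCopies.
Variables (V : finType) (arc : rel V) (k l : nat).
Local Notation star_map := {ffun 'I_(k + l).+1 -> V}.

Definition copies_at (p : 'I_(k + l).+1) (v : V) : {set star_map} :=
  [set f | is_star_copy arc f && (f p == v)].

Definition copies_through (v : V) : {set star_map} :=
  [set f | is_star_copy arc f && (v \in codom f)].

(* With v at the center, the out-leaves (resp. in-leaves) are mapped
   injectively into the strict out- (resp. in-) neighbourhood of v. *)
Lemma card_copies_at_center v :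
  (#|copies_at ord0 v| <= #|out_nbhd arc v| ^_ k * #|in_nbhd arc v| ^_ l)%N.
Proof.
pose leaves (f : star_map) :=
  ([ffun i : 'I_k => f (out_leaf l i)], [ffun j : 'I_l => f (in_leaf k j)]).
have leaves_inj : {in copies_at ord0 v &, injective leaves}.
  move=> f g; rewrite !inE => /andP[_ /eqP f0] /andP[_ /eqP g0] [] /ffunP fgO /ffunP fgI.
  apply/ffunP => x; case: (star_vertexP x) => [->|[i ->]|[j ->]].
  - by rewrite f0 g0.
  - by have := fgO i; rewrite !ffunE.
  - by have := fgI j; rewrite !ffunE.
rewrite -(card_in_imset leaves_inj).
pose inj_into n (S : {set V}) : {set {ffun 'I_n -> V}} :=
  [set g in ffun_on (mem S) | injectiveb g].
have sub : leaves @: copies_at ord0 v \subset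
           setX (inj_into k (out_nbhd arc v)) (inj_into l (in_nbhd arc v)).
  apply/subsetP => _ /imsetP[f + ->]; rewrite inE => /andP[cf /eqP f0].
  have [f_inj f_arc] := star_copyE cf.
  rewrite !inE /=; apply/andP; split; apply/andP; split.
  - apply/ffun_onP => i; rewrite ffunE !inE -f0 !f_arc star_arc_out.
    exact: star_arc_out_back.
  - apply/injectiveP => i j; rewrite !ffunE => /f_inj /(congr1 val).
    by rewrite !out_leafE => -[] /val_inj.
  - apply/ffun_onP => j; rewrite ffunE !inE -f0 !f_arc star_arc_in.
    exact: star_arc_in_back.
  - apply/injectiveP => i j; rewrite !ffunE => /f_inj /(congr1 val).
    by rewrite !in_leafE => /eqP; rewrite eqSS eqn_add2l => /eqP /val_inj.
by apply: leq_trans (subset_leq_card sub) _; rewrite cardsX !card_inj_ffuns_on !card_ord.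
Qed.

Definition leaf_box (p : 'I_(k + l).+1) (c v : V) (Fo Fi : {set V})
    (x : 'I_(k + l).+1) : {set V} :=
  if x == ord0 then [set c] else if x == p then [set v] else
  if (x <= k)%N then Fo else Fi.

Lemma card_copies_at_leaf v (p : 'I_(k + l).+1) (C : {set V}) (Fo Fi : V -> {set V}) :
  (forall f : star_map, is_star_copy arc f -> f p = v ->
     f ord0 \in C /\ forall x, x != ord0 -> x != p ->
       f x \in (if (x <= k)%N then Fo (f ord0) else Fi (f ord0))) ->
  (#|copies_at p v| <= \sum_(c in C) \prod_x #|leaf_box p c v (Fo c) (Fi c) x|)%N.
Proof.
move=> copy_shape.
pose box c := [set f : star_map | [forall x, f x \in leaf_box p c v (Fo c) (Fi c) x]].
apply: leq_trans (card_le_sum_bigcup (P := [in C]) (B := box) _) _.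
  apply/subsetP => f; rewrite inE => /andP[cf /eqP fp].
  have [fC f_leaf] := copy_shape f cf fp.
  apply/bigcupP; exists (f ord0) => //.
  rewrite inE; apply/forallP => x; rewrite /leaf_box.
  case: eqP => [->|/eqP x0]; first by rewrite inE.
  case: eqP => [->|/eqP xp]; first by rewrite inE fp.
  exact: f_leaf.
apply: leq_sum => c _; rewrite -(cardsXn (fun x => leaf_box p c v (Fo c) (Fi c) x)).
by apply: subset_leq_card; apply/subsetP => f; rewrite !inE.
Qed.

Lemma card_leaf_box_out (q : 'I_k) (c v : V) (Fo Fi : {set V}) :
  (\prod_x #|leaf_box (out_leaf l q) c v Fo Fi x| = #|Fo| ^ k.-1 * #|Fi| ^ l)%N.
Proof.
rewrite big_ord_recl /leaf_box eqxx cards1 mul1n big_split_ord /=.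
congr (_ * _)%N.
  rewrite (eq_bigr (fun i => if i == q then 1 else #|Fo|)%N); last first.
    move=> i _; have -> : (lift ord0 (lshift l i) == out_leaf l q) = (i == q).
      by rewrite -(inj_eq val_inj) /= /bump /= !add1n eqSS.
    by case: ifP => _; [rewrite cards1 | rewrite /bump /= add1n ltn_ord].
  rewrite (bigD1 q) //= eqxx mul1n (eq_bigr (fun _ => #|Fo|)); last by move=> i /negbTE ->.
  by rewrite (prod_nat_const (fun i => i != q)) (cardC1 q) card_ord.
rewrite (eq_bigr (fun _ => #|Fi|)) ?prod_nat_const ?card_ord // => i _.
have -> : (lift ord0 (rshift k i) == out_leaf l q) = false.
  by apply/negbTE; rewrite -(inj_eq val_inj) /= /bump /= !add1n eqSS; have := ltn_ord q; lia.
by rewrite /bump /= add1n ltnNge leq_addr.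
Qed.

Lemma card_leaf_box_in (q : 'I_l) (c v : V) (Fo Fi : {set V}) :
  (\prod_x #|leaf_box (in_leaf k q) c v Fo Fi x| = #|Fo| ^ k * #|Fi| ^ l.-1)%N.
Proof.
rewrite big_ord_recl /leaf_box eqxx cards1 mul1n big_split_ord /=.
congr (_ * _)%N.
  rewrite (eq_bigr (fun _ => #|Fo|)) ?prod_nat_const ?card_ord // => i _.
  have -> : (lift ord0 (lshift l i) == in_leaf k q) = false.
    by apply/negbTE; rewrite -(inj_eq val_inj) /= /bump /= !add1n eqSS; have := ltn_ord i; lia.
  by rewrite /bump /= add1n ltn_ord.
rewrite (eq_bigr (fun i => if i == q then 1 else #|Fi|)%N); last first.
  move=> i _; have -> : (lift ord0 (rshift k i) == in_leaf k q) = (i == q).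
    by rewrite -(inj_eq val_inj) /= /bump /= !add1n eqSS eqn_add2l.
  by case: ifP => _; [rewrite cards1 | rewrite /bump /= add1n ltnNge leq_addr].
rewrite (bigD1 q) //= eqxx mul1n (eq_bigr (fun _ => #|Fi|)); last by move=> i /negbTE ->.
by rewrite (prod_nat_const (fun i => i != q)) (cardC1 q) card_ord.
Qed.

Lemma copy_other_leaf (f : star_map) (p x : 'I_(k + l).+1) :
  is_star_copy arc f -> p != ord0 -> x != ord0 -> x != p ->
  f x \in non_nbhd arc (f p) :&:
          (if (x <= k)%N then out_nbhd arc (f ord0) else in_nbhd arc (f ord0)).
Proof.
move=> cf p0 x0 xp; have [f_inj f_arc] := star_copyE cf.
rewrite !inE /adjacent !f_arc !(negbTE (star_arc_leaves _ _)) //= (inj_eq f_inj) xp /=.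
case: (star_vertexP x) => [x0'|[i ->]|[j ->]]; first by rewrite x0' eqxx in x0.
- by rewrite out_leafE ltn_ord !inE !f_arc star_arc_out (negbTE (star_arc_out_back _ _)).
- by rewrite in_leafE ltnNge leq_addr /= !inE !f_arc star_arc_in (negbTE (star_arc_in_back _ _)).
Qed.

(* With v at an out-leaf, the center is an in-neighbour c of v. *)
Lemma card_copies_at_out_leaf v (q : 'I_k) :
  (#|copies_at (out_leaf l q) v| <=
   \sum_(c in in_nbhd arc v)
     #|non_nbhd arc v :&: out_nbhd arc c| ^ k.-1 * #|non_nbhd arc v :&: in_nbhd arc c| ^ l)%N.
Proof.
apply: leq_trans (card_copies_at_leaf (C := in_nbhd arc v)
  (Fo := fun c => non_nbhd arc v :&: out_nbhd arc c)
  (Fi := fun c => non_nbhd arc v :&: in_nbhd arc c) _) _; last first.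
  by apply: leq_sum => c _; rewrite card_leaf_box_out.
move=> f cf fp; have [_ f_arc] := star_copyE cf.
have p0 : out_leaf l q != ord0 by rewrite -(inj_eq val_inj) out_leafE.
split; first by rewrite !inE -fp !f_arc star_arc_out (negbTE (star_arc_out_back _ _)).
by move=> x x0 xp; have := copy_other_leaf cf p0 x0 xp; rewrite fp; case: ifP.
Qed.

(* With v at an in-leaf, the center is an out-neighbour c of v. *)
Lemma card_copies_at_in_leaf v (q : 'I_l) :
  (#|copies_at (in_leaf k q) v| <=
   \sum_(c in out_nbhd arc v)
     #|non_nbhd arc v :&: out_nbhd arc c| ^ k * #|non_nbhd arc v :&: in_nbhd arc c| ^ l.-1)%N.
Proof.
apply: leq_trans (card_copies_at_leaf (C := out_nbhd arc v)
  (Fo := fun c => non_nbhd arc v :&: out_nbhd arc c)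
  (Fi := fun c => non_nbhd arc v :&: in_nbhd arc c) _) _; last first.
  by apply: leq_sum => c _; rewrite card_leaf_box_in.
move=> f cf fp; have [_ f_arc] := star_copyE cf.
have p0 : in_leaf k q != ord0 by rewrite -(inj_eq val_inj) in_leafE.
split; first by rewrite !inE -fp !f_arc star_arc_in (negbTE (star_arc_in_back _ _)).
by move=> x x0 xp; have := copy_other_leaf cf p0 x0 xp; rewrite fp; case: ifP.
Qed.

(* Union bound over the star vertex mapped to v. *)
Lemma card_copies_through v :
  (#|copies_through v| <=
   #|out_nbhd arc v| ^_ k * #|in_nbhd arc v| ^_ l
   + k * \sum_(c in in_nbhd arc v)
       #|non_nbhd arc v :&: out_nbhd arc c| ^ k.-1 * #|non_nbhd arc v :&: in_nbhd arc c| ^ l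
   + l * \sum_(c in out_nbhd arc v)
       #|non_nbhd arc v :&: out_nbhd arc c| ^ k * #|non_nbhd arc v :&: in_nbhd arc c| ^ l.-1)%N.
Proof.
apply: leq_trans (card_le_sum_bigcup (P := predT) (B := copies_at ^~ v) _) _.
  apply/subsetP => f; rewrite inE => /andP[cf /codomP[p vp]].
  by apply/bigcupP; exists p => //; rewrite inE cf vp eqxx.
rewrite big_ord_recl big_split_ord /= -addnA leq_add ?card_copies_at_center //.
apply: leq_add; rewrite -[X in (_ <= X * _)%N]card_ord -sum_nat_const; apply: leq_sum => q _.
- exact: card_copies_at_out_leaf.
- exact: card_copies_at_in_leaf.
Qed.

End StarCopies.

(* Maps hitting v: all maps minus those avoiding v. *)
Lemma card_maps_hitting (V I : finType) (v : V) :
  #|[set f : {ffun I -> V} | v \in codom f]| = (#|V| ^ #|I| - #|V|.-1 ^ #|I|)%N.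
Proof.
rewrite cardsCs card_ffun; congr (_ - _)%N; rewrite -(cardC1 v) -card_ffun_on.
apply: eq_card => f; rewrite !inE; apply/idP/ffun_onP.
  by move=> nf x; rewrite !inE; apply: contra nf => /eqP <-; apply: codom_f.
by move=> f_avoid; apply/codomP => -[x fx]; have := f_avoid x; rewrite !inE fx eqxx.
Qed.

Lemma leq_expn2r (a b e : nat) : (a <= b)%N -> (a ^ e <= b ^ e)%N.
Proof. by move=> ab; elim: e => // e IH; rewrite !expnS leq_mul. Qed.

Lemma ffact_le_expn (n m : nat) : (n ^_ m <= n ^ m)%N.
Proof.
rewrite ffact_prod -[X in (_ <= _ ^ X)%N]card_ord -prod_nat_const.
by apply: leq_prod => i _; apply: leq_subr.
Qed.

(* For at least three factors, a (a-1) (a-2) ... <= (a-1)^k since a (a-2) <= (a-1)^2;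
   this is where k >= 3 is needed. *)
Lemma ffact_le_pred_expn (a k : nat) : (3 <= k)%N -> (a ^_ k <= a.-1 ^ k)%N.
Proof.
move=> /subnK <-; rewrite addn3; set j := (k - 3)%N.
case: a => [|b]; first by rewrite ffact0n.
rewrite /= !ffactnS /=.
apply: (@leq_trans (b.+1 * (b * (b.-1 * b ^ j)))).
  rewrite !leq_mul2l (leq_trans (ffact_le_expn _ _)) ?orbT //.
  by apply: leq_expn2r; apply: leq_trans (leq_pred _) (leq_pred _).
rewrite !expnS !mulnA leq_mul2r; apply/orP; right.
by case: b => // b /=; nia.
Qed.

Local Open Scope ring_scope.

(* The constant p^p q^q / (p+q)^(p+q) of the weighted AM-GM inequality;
   lambda0 k l is amgm_const k l. *)
Definition amgm_const (R : fieldType) (p q : nat) : R :=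
  (p ^ p * q ^ q)%N%:R / ((p + q) ^ (p + q))%N%:R.

(* Weighted AM-GM: x^p y^q <= p^p q^q / (p+q)^(p+q) (x + y)^(p+q), obtained
   from the AM-GM inequality for p copies of x/p and q copies of y/q. *)
Lemma amgm_pow (R : realFieldType) (p q : nat) (x y : R) :
  (0 < p)%N -> 0 <= x -> 0 <= y ->
  x ^+ p * y ^+ q <= amgm_const R p q * (x + y) ^+ (p + q).
Proof.
move=> p_gt0 x0 y0; rewrite /amgm_const.
have pR : (p%:R : R) != 0 by rewrite pnatr_eq0 -lt0n.
case: q => [|q].
  rewrite expr0 mulr1 expn0 muln1 addn0 divff ?mul1r; last first.
    by rewrite pnatr_eq0 expn_eq0 negb_and -lt0n p_gt0.
  by rewrite lerXn2r // ?nnegrE ?addr_ge0 // lerDl.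
have qR : (q.+1%:R : R) != 0 by rewrite pnatr_eq0.
pose E (i : 'I_(p + q.+1)) := if (i < p)%N then x / p%:R else y / q.+1%:R.
have E_ge0 : {in predT, forall i, 0 <= E i}.
  by move=> i _; rewrite /E; case: ifP => _; apply: divr_ge0.
have := Order.le_of_leif (leif_AGM E_ge0).
rewrite cardT size_enum_ord.
have -> : \prod_(i in predT) E i = \prod_(i < p + q.+1) E i by apply: eq_bigl.
have -> : \sum_(i in predT) E i = \sum_(i < p + q.+1) E i by apply: eq_bigl.
rewrite 2!big_split_ord /=.
have E_out (i : 'I_p) : E (lshift q.+1 i) = x / p%:R by rewrite /E /= ltn_ord.
have E_in (i : 'I_q.+1) : E (rshift p i) = y / q.+1%:R by rewrite /E /= ltnNge leq_addr.
rewrite 2!(eq_bigr _ (fun i _ => E_out i)) 2!(eq_bigr _ (fun i _ => E_in i)).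
rewrite !prodr_const !sumr_const !card_ord -[(x / _) *+ p]mulr_natr.
rewrite -[(y / _) *+ q.+1]mulr_natr !divfK // !expr_div_n => amgm.
have P0 : 0 < (p%:R : R) ^+ p by rewrite exprn_gt0 // ltr0n.
have Q0 : 0 < (q.+1%:R : R) ^+ q.+1 by rewrite exprn_gt0 // ltr0n.
have S0 : 0 < ((p + q.+1)%:R : R) by rewrite ltr0n addnS.
have -> : x ^+ p * y ^+ q.+1 =
    x ^+ p / p%:R ^+ p * (y ^+ q.+1 / q.+1%:R ^+ q.+1) * (p%:R ^+ p * q.+1%:R ^+ q.+1).
  by field; rewrite !expf_neq0.
apply: le_trans (ler_wpM2r _ amgm) _; first by apply: mulr_ge0; apply: ltW.
by rewrite natrM !natrX le_eqVlt; apply/orP; left; apply/eqP; field; rewrite expf_neq0 // gt_eqF.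
Qed.

Lemma amgm_nat (R : realFieldType) (p q x y N : nat) :
  (0 < p)%N -> (x + y <= N)%N ->
  ((x ^ p * y ^ q)%N%:R : R) <= amgm_const R p q * N%:R ^+ (p + q).
Proof.
move=> p_gt0 xyN; rewrite natrM !natrX.
apply: le_trans (amgm_pow q p_gt0 (ler0n R x) (ler0n R y)) _.
apply: ler_wpM2l; first by apply: divr_ge0; apply: ler0n.
by rewrite lerXn2r ?nnegrE ?addr_ge0 ?ler0n // -natrD ler_nat.
Qed.

(* y^(n+1) - (y-1)^(n+1) <= (n+1) y^n for y >= 1: each of the n+1 terms of
   the factorization of the difference is at most y^n. *)
Lemma pow_gap_ub (R : realFieldType) (y : R) (n : nat) :
  1 <= y -> y ^+ n.+1 - (y - 1) ^+ n.+1 <= n.+1%:R * y ^+ n.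
Proof.
move=> y1; have y0 : 0 <= y by lra.
rewrite subrXX (_ : y - (y - 1) = 1); last by ring.
rewrite mul1r mulr_natl -[X in _ *+ X]card_ord -sumr_const.
apply: ler_sum => i _; rewrite -[X in _ <= y ^+ X](subnK (ltnSE (ltn_ord i))) exprD /=.
by apply: ler_wpM2l; rewrite ?exprn_ge0 // lerXn2r ?nnegrE; lra.
Qed.

Lemma pow_gap_lb (R : realFieldType) (x : R) (m : nat) : 0 <= x -> (2 <= m)%N ->
  m.+1%:R * (x + 1) * x ^+ (m - 1) <= (x + 1) ^+ m.+1 - x ^+ m.+1.
Proof.
move=> x0 /subnK <-; rewrite addn2 subn1 /=; set j := (m - 2)%N; clearbody j.
elim: j => [|j IH]; first by rewrite !exprS !expr0; nra.
rewrite [j.+4%:R]mulrS; set J := j.+3%:R in IH *.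
have J1 : 1 <= J by rewrite ler1n.
set gap := (x + 1) ^+ j.+3 - x ^+ j.+3 in IH.
set t := x ^+ j.+1 in IH.
have -> : (x + 1) ^+ j.+4 - x ^+ j.+4 = (x + 1) * gap + x * x * t by rewrite /gap /t !exprS; ring.
have -> : x ^+ j.+2 = x * t by rewrite /t exprS.
have IH' := ler_wpM2l (addr_ge0 x0 ler01) IH.
have rest : 0 <= t * ((J - 1) * x + J) by rewrite mulr_ge0 ?exprn_ge0 //; nra.
nra.
Qed.

(* (1 + 1/(k-1))^(k-1) <= (1 + 1/k)^k, cleared of denominators. *)
Lemma pow_ratio_step (k : nat) : (1 <= k)%N ->
  (k ^ k * k ^ (k - 1) <= k.+1 ^ k * (k - 1) ^ (k - 1))%N.
Proof.
case: k => // [[|j]] _ //; rewrite subn1 /=.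
suff : (j.+2%:R : rat) ^+ j.+2 * j.+2%:R ^+ j.+1 <= j.+3%:R ^+ j.+2 * j.+1%:R ^+ j.+1.
  by rewrite -!natrX -!natrM ler_nat.
set K : rat := j.+2%:R.
have -> : (j.+3%:R : rat) = K + 1 by rewrite /K mulrS addrC.
have eK1 : (j.+1%:R : rat) = K - 1 by rewrite /K mulrS; ring.
rewrite eK1.
have K2 : 2 <= K by rewrite /K ler_nat.
have -> : K ^+ j.+2 * K ^+ j.+1 = K * (K * K) ^+ j.+1.
  by rewrite exprMn -!exprD -exprS; congr (_ ^+ _); lia.
have -> : (K + 1) ^+ j.+2 * (K - 1) ^+ j.+1 = (K + 1) * (K * K - 1) ^+ j.+1.
  by rewrite exprS -mulrA -exprMn; congr (_ * _ ^+ _); ring.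
have gap := @pow_gap_ub rat (K * K) j ltac:(nra).
rewrite eK1 exprS in gap *; set T := (K * K) ^+ j in gap *; set U := (K * K - 1) ^+ j.+1 in gap *.
have T0 : 0 <= T by rewrite exprn_ge0 //; nra.
have K1 : 0 <= K + 1 by lra.
have gap' := ler_wpM2l K1 gap.
nra.
Qed.

(* Iterating pow_ratio_step: (1 + 1/(l-1))^(l-1) <= (1 + 1/(k-1))^(k-1)
   for 1 <= l <= k, cleared of denominators. *)
Lemma pow_ratio_mono (k l : nat) : (1 <= l)%N -> (l <= k)%N ->
  ((k - 1) ^ (k - 1) * l ^ (l - 1) <= k ^ (k - 1) * (l - 1) ^ (l - 1))%N.
Proof.
move=> l1 /subnK <-; elim: (k - l)%N => [|d IH]; first by rewrite add0n mulnC.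
set k' := (d + l)%N in IH *.
rewrite (_ : (d.+1 + l - 1 = k')%N); last by rewrite /k'; lia.
rewrite (_ : (d.+1 + l = k'.+1)%N); last by rewrite /k'; lia.
have k'1 : (1 <= k')%N by rewrite /k'; lia.
have P : (0 < (k' - 1) ^ (k' - 1))%N by rewrite expn_gt0; case: (k' - 1)%N.
rewrite -(leq_pmul2r P).
apply: (@leq_trans (k' ^ k' * (k' ^ (k' - 1) * (l - 1) ^ (l - 1)))).
  by rewrite mulnAC -mulnA leq_mul2l IH orbT.
by rewrite mulnA (mulnAC (k'.+1 ^ k')%N) leq_mul2r pow_ratio_step ?orbT.
Qed.

Lemma lambda1_out_leaf_nat (k l : nat) : (1 <= l)%N -> (l <= k)%N ->
  (k * ((k - 1) ^ (k - 1) * l ^ l) <= k ^ k * l * (l - 1) ^ (l - 1))%N.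
Proof.
move=> l1 lk; have := pow_ratio_mono l1 lk.
case: k lk => [|k] lk; first by lia.
case: l l1 lk => [|l] // _ _; rewrite !subSS !subn0 (expnS k.+1 k) (expnS l.+1 l) => H.
have -> : (k.+1 * (k ^ k * (l.+1 * l.+1 ^ l)) = (k.+1 * l.+1) * (k ^ k * l.+1 ^ l))%N by ring.
have -> : (k.+1 * k.+1 ^ k * l.+1 * l ^ l = (k.+1 * l.+1) * (k.+1 ^ k * l ^ l))%N by ring.
by rewrite leq_mul2l H orbT.
Qed.

(* k lambda(k-1, l) <= lambda1 and l lambda(k, l-1) = lambda1: the AM-GM
   constants of the out- and in-leaf terms, weighted by the number of leaves. *)
Lemma lambda1_out_leaf (R : realFieldType) (k l : nat) : (1 <= l)%N -> (l <= k)%N ->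
  k%:R * amgm_const R k.-1 l <= lambda1 R k l.
Proof.
move=> l1 lk; rewrite /amgm_const /lambda1 (_ : (k.-1 + l = k + l - 1)%N); last by lia.
rewrite mulrA -natrM ler_wpM2r ?invr_ge0 ?ler0n // ler_nat -subn1.
exact: lambda1_out_leaf_nat.
Qed.

Lemma lambda1_in_leaf (R : realFieldType) (k l : nat) : (1 <= l)%N ->
  l%:R * amgm_const R k l.-1 = lambda1 R k l.
Proof.
move=> l1; rewrite /amgm_const /lambda1 (_ : (k + l.-1 = k + l - 1)%N); last by lia.
by rewrite mulrA -natrM -subn1 mulnA (mulnC l) mulnAC.
Qed.

Lemma center_term_bound (R : realFieldType) (k l a b d : nat) :
  (3 <= k)%N -> (a + b <= d)%N ->
  ((a ^_ k * b ^_ l)%N%:R : R) <= lambda0 R k l * d.-1%:R ^+ (k + l).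
Proof.
move=> k3 abd; have [a0 | a_gt0] := posnP a.
  rewrite a0 ffact_small ?mul0n; last by lia.
  by apply: mulr_ge0; rewrite ?divr_ge0 ?exprn_ge0 ?ler0n.
apply: (@le_trans _ _ ((a.-1 ^ k * b ^ l)%N%:R)).
  by rewrite ler_nat leq_mul ?ffact_le_pred_expn ?ffact_le_expn.
apply: amgm_nat; lia.
Qed.

Lemma leaf_sum_bound (R : realFieldType) (V : finType) (C : {set V}) (x y : V -> nat)
    (p q N : nat) :
  (0 < p)%N -> (forall c, x c + y c <= N)%N ->
  ((\sum_(c in C) x c ^ p * y c ^ q)%N%:R : R) <=
    #|C|%:R * (amgm_const R p q * N%:R ^+ (p + q)).
Proof.
move=> p_gt0 xyN; rewrite natr_sum mulr_natl -sumr_const.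
by apply: ler_sum => c _; apply: amgm_nat.
Qed.

Lemma card_copies_through_bound (R : realFieldType) (V : finType) (arc : rel V)
    (k l : nat) (v : V) : (3 <= k)%N -> (1 <= l)%N -> (l <= k)%N ->
  (#|copies_through arc k l v|%:R : R) <=
    lambda0 R k l * #|nbhd arc v|.-1%:R ^+ (k + l)
    + lambda1 R k l * #|nbhd arc v|%:R * #|non_nbhd arc v|%:R ^+ (k + l - 1).
Proof.
move=> k3 l1 lk; have := card_copies_through arc k l v.
rewrite -(ler_nat R) !natrD => /le_trans; apply; rewrite -addrA.
set a := #|out_nbhd arc v|; set b := #|in_nbhd arc v|; set N := #|non_nbhd arc v|.
have abd := card_out_in_nbhd arc v; rewrite -/a -/b in abd.
apply: lerD; first exact: center_term_bound.
set w := lambda1 R k l * N%:R ^+ (k + l - 1).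
have w0 : 0 <= w by rewrite mulr_ge0 ?divr_ge0 ?exprn_ge0 ?ler0n.
have out_leaves : (k * \sum_(c in in_nbhd arc v)
    #|non_nbhd arc v :&: out_nbhd arc c| ^ k.-1 * #|non_nbhd arc v :&: in_nbhd arc c| ^ l)%N%:R
    <= b%:R * w.
  rewrite natrM; apply: le_trans (ler_wpM2l (ler0n _ _)
    (leaf_sum_bound _ _ _ _ (card_non_nbhd_split arc v))) _; first by lia.
  rewrite (_ : (k.-1 + l = k + l - 1)%N); last by lia.
  rewrite mulrCA ler_wpM2l // mulrA ler_wpM2r ?exprn_ge0 ?ler0n //.
  exact: lambda1_out_leaf.
have in_leaves : (l * \sum_(c in out_nbhd arc v)
    #|non_nbhd arc v :&: out_nbhd arc c| ^ k * #|non_nbhd arc v :&: in_nbhd arc c| ^ l.-1)%N%:R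
    <= a%:R * w.
  rewrite natrM; apply: le_trans (ler_wpM2l (ler0n _ _)
    (leaf_sum_bound _ _ _ _ (card_non_nbhd_split arc v))) _; first by lia.
  rewrite (_ : (k + l.-1 = k + l - 1)%N); last by lia.
  by rewrite mulrCA (mulrA l%:R) lambda1_in_leaf.
apply: le_trans (lerD out_leaves in_leaves) _.
by rewrite -mulrDl -natrD mulrAC -/w mulrC ler_wpM2l // ler_nat addnC.
Qed.

Lemma card_maps_hitting_lb (R : realFieldType) (V : finType) (m : nat) (v : V) :
  (2 <= m)%N ->
  m.+1%:R * #|V|%:R * #|V|.-1%:R ^+ (m - 1) <=
    (#|[set f : {ffun 'I_m.+1 -> V} | v \in codom f]|%:R : R).
Proof.
move=> m2; have V_gt0 : (0 < #|V|)%N by apply/card_gt0P; exists v.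
rewrite card_maps_hitting card_ord natrB ?leq_exp2r ?leq_pred // !natrX.
by rewrite -(prednK V_gt0) -[#|V|.-1.+1%:R]natr1 pow_gap_lb ?ler0n.
Qed.

Lemma density_bound (R : realFieldType) (m d N : nat) (T D L0 L1 : R) :
  (1 <= m)%N -> 0 <= L0 -> 0 <= L1 -> 0 < D ->
  m.+1%:R * (d + N).+1%:R * (d + N)%:R ^+ (m - 1) <= D ->
  T <= L0 * d.-1%:R ^+ m + L1 * d%:R * N%:R ^+ (m - 1) ->
  T / D <= m.+1%:R^-1 * (L0 * (d%:R / (d + N).+1%:R) ^+ m
    + L1 * (d%:R / (d + N).+1%:R) * (1 - d%:R / (d + N).+1%:R) ^+ (m - 1)).
Proof.
case: m => // j _; rewrite subn1 /=.
set n : R := (d + N).+1%:R; set x : R := (d + N)%:R; set u := d%:R / n.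
move=> L0_ge0 L1_ge0 D_gt0 HD HT.
have n_gt0 : 0 < n by rewrite ltr0n.
have un : u * n = d%:R by rewrite /u divfK ?gt_eqF.
have uE : 1 - u = N.+1%:R / n.
  rewrite /u /n -addnS natrD; field.
  by apply: lt0r_neq0; have := ler0n R d; have := ler0n R N; lra.
have u_ge0 : 0 <= u by rewrite divr_ge0 ?ler0n // ltW.
have u1_ge0 : 0 <= 1 - u by rewrite uE divr_ge0 ?ler0n // ltW.
have x_ge0 : 0 <= x by rewrite ler0n.
have ux : d.-1%:R <= u * x.
  rewrite /u mulrAC ler_pdivlMr // /x /n -!natrM ler_nat.
  by case: (d) => //= d'; nia.
have u1x : N%:R <= (1 - u) * x.
  rewrite uE mulrAC ler_pdivlMr // /x /n -!natrM ler_nat; nia.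
clearbody u; rewrite ler_pdivrMr //; apply: le_trans HT _.
have rhs_ge0 : 0 <= j.+2%:R^-1 * (L0 * u ^+ j.+1 + L1 * u * (1 - u) ^+ j).
  rewrite mulr_ge0 ?invr_ge0 ?ler0n //.
  by apply: addr_ge0; rewrite ?mulr_ge0 ?exprn_ge0.
apply: le_trans (ler_wpM2l rhs_ge0 HD).
have -> : j.+2%:R^-1 * (L0 * u ^+ j.+1 + L1 * u * (1 - u) ^+ j) * (j.+2%:R * n * x ^+ j)
    = L0 * (u * n) * (u * x) ^+ j + L1 * (u * n) * ((1 - u) * x) ^+ j.
  by rewrite !exprMn exprS; field; apply: lt0r_neq0; have := ler0n R j; lra.
rewrite un exprS; apply: lerD; rewrite -!mulrA ler_wpM2l //.
  apply: ler_pM; rewrite ?ler0n ?exprn_ge0 ?ler_nat ?leq_pred //.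
  by rewrite lerXn2r ?nnegrE ?ler0n ?mulr_ge0.
by rewrite ler_wpM2l ?ler0n // lerXn2r ?nnegrE ?ler0n ?mulr_ge0.
Qed.

Theorem claim4p1 (R : realFieldType) (k l : nat) (V : finType) (arc : rel V)
    (Hloop : irreflexive arc) (Hlk : (l <= k)%N) (Hl : (1 <= l)%N)
    (Hm : (6 <= k + l)%N) (v : V) :
  s_star R arc k l v <=
    ((k + l).+1%:R)^-1 *
      (lambda0 R k l * (rho R arc v) ^+ (k + l)
       + lambda1 R k l * rho R arc v * (1 - rho R arc v) ^+ (k + l - 1)).
Proof.
have k3 : (3 <= k)%N by lia.
have m2 : (2 <= k + l)%N by lia.
have card_V := card_nbhd_non_nbhd v Hloop.
rewrite /s_star /rho -/(nbhd arc v) card_V.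
apply: density_bound; rewrite ?divr_ge0 ?ler0n //.
- exact: ltnW.
- rewrite ltr0n card_gt0; apply/set0Pn; exists [ffun=> v]; rewrite inE.
  by apply/codomP; exists ord0; rewrite ffunE.
- by have := card_maps_hitting_lb R v m2; rewrite card_V.
- exact: card_copies_through_bound.
Qed.
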